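(* Suppose $1/n\ll\varepsilon\ll\varepsilon_1\ll\eta_1\ll\tau\ll\varepsilon_3\ll\eta_2\ll 1$ and let $G$ be an $\varepsilon$-extremal digraph on $n$ vertices with $\delta^0(G)\geq n/2$. Then there is a partition of $V(G)$ into sets $A,B,S,T$ of sizes $a,b,s,t$ satisfying one of the following: (1) conditions (P1)–(P7); (2) conditions (Q1)–(Q8) together with $a\leq b$; (3) conditions (R1)–(R9).
   Context: Digraphs have no loops and at most one edge in each direction between two vertices. $\delta^0(G)$ is the minimum semidegree (minimum over vertices of the minimum of in- and outdegree). For $X\subseteq V(G)$ and a vertex $x$, $d^+_X(x)=|N^+(x)\cap X|$, $d^-_X(x)=|N^-(x)\cap X|$, and $d^\pm_X(x)\geq c$ means both $d^+_X(x)\geq c$ and $d^-_X(x)\geq c$. $E(X,Y)$ is the set of edges $xy$ with $x\in X,y\in Y$, $e(X,Y)=|E(X,Y)|$; $G[X]$ is the induced subdigraph; $G[X,Y]$ is the digraph on $X\cup Y$ with edge set $E(X,Y)\cup E(Y,X)$. $G$ is $\varepsilon$-extremal if there is a partition $A,B,S,T$ of $V(G)$ with sizes $a,b,s,t$ such that $|a-b|,|s-t|\leq1$ and $e(A\cup S,A\cup T)<\varepsilon n^2$. Conditions for a partition $A,B,S,T$ of $V(G)$ with sizes $a,b,s,t$: (P1) $\lfloor n/2\rfloor-\varepsilon_3 n\leq s,t\leq \lceil n/2\rceil+\varepsilon_3 n$; (P2) $\delta^0(G[S]),\delta^0(G[T])\geq \eta_2 n$; (P3) $d^\pm_S(x)\geq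 n/2-\varepsilon_3 n$ for all but at most $\varepsilon_3 n$ vertices $x\in S$; (P4) $d^\pm_T(x)\geq n/2-\varepsilon_3 n$ for all but at most $\varepsilon_3 n$ vertices $x\in T$; (P5) $a+b\leq\varepsilon_3 n$; (P6) for all $x\in A$: $d^-_T(x),d^+_S(x)>n/2-3\eta_2 n$ and $d^-_S(x),d^+_T(x)\leq 3\eta_2 n$; (P7) for all $x\in B$: $d^-_S(x),d^+_T(x)>n/2-3\eta_2 n$ and $d^-_T(x),d^+_S(x)\leq 3\eta_2 n$. (Q1) $\lfloor n/2\rfloor-\varepsilon_3 n\leq a,b\leq\lceil n/2\rceil+\varepsilon_3 n$; (Q2) $\delta^0(G[A,B])\geq n/50$; (Q3) $d^\pm_B(x)\geq n/2-\varepsilon_3 n$ for all but at most $\varepsilon_3 n$ vertices $x\in A$; (Q4) $d^\pm_A(x)\geq n/2-\varepsilon_3 n$ for all but at most $\varepsilon_3 n$ vertices $x\in B$; (Q5) $s+t\leq\varepsilon_3 n$; (Q6) $d^-_A(x),d^+_B(x)\geq n/50$ for all $x\in S$; (Q7) $d^-_B(x),d^+_A(x)\geq n/50$ for all $x\in T$; (Q8) if $a<b$, then $d^\pm_B(x)<n/20$ for all $x\in B$ (i.e. both $d^+_B(x),d^-_B(x)<n/20$), $d^-_B(x)<n/20$ for all $x\in S$ and $d^+_B(x)<n/20$ for all $x\in T$. (R1) $a,b,s,t\geq\tau n$; (R2) $|a-b|,|s-t|\leq\varepsilon_1 n$; (R3) $\delta^0(G[A,B])\geq\eta_1 n$; (R4)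 $d^+_{B\cup S}(x),d^-_{A\cup S}(x)\geq\eta_1 n$ for all $x\in S$; (R5) $d^+_{A\cup T}(x),d^-_{B\cup T}(x)\geq\eta_1 n$ for all $x\in T$; (R6) $d^\pm_B(x)\geq b-\varepsilon^{1/3}n$ for all but at most $\varepsilon_1 n$ vertices $x\in A$; (R7) $d^\pm_A(x)\geq a-\varepsilon^{1/3}n$ for all but at most $\varepsilon_1 n$ vertices $x\in B$; (R8) $d^+_{B\cup S}(x)\geq b+s-\varepsilon^{1/3}n$ and $d^-_{A\cup S}(x)\geq a+s-\varepsilon^{1/3}n$ for all but at most $\varepsilon_1 n$ vertices $x\in S$; (R9) $d^+_{A\cup T}(x)\geq a+t-\varepsilon^{1/3}n$ and $d^-_{B\cup T}(x)\geq b+t-\varepsilon^{1/3}n$ for all but at most $\varepsilon_1 n$ vertices $x\in T$. The hierarchy $\alpha\ll\beta$ means the statement holds whenever $\alpha$ is sufficiently small as a function of $\beta$; constants are chosen from right to left. *)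

From Stdlib Require Import Reals.
From mathcomp Require Import all_boot.
Local Open Scope R_scope.

Set Implicit Arguments.
Unset Strict Implicit.
Unset Printing Implicit Defensive.

Section Digraph.
Variables (V : finType) (E : rel V).
(* A digraph is V with an irreflexive edge relation E (x -> y iff E x y);
   a relation automatically has at most one edge per direction. *)

Definition nR : R := INR #|V|.

Definition dout (X : {set V}) (x : V) : nat := #|[set y in X | E x y]|.
Definition din  (X : {set V}) (x : V) : nat := #|[set y in X | E y x]|.

Definition eXY (X Y : {set V}) : nat :=
  #|[set p : V * V | [&& p.1 \in X, p.2 \in Y & E p.1 p.2]]|.

(* A,B,S,T is a partition of V(G) (parts may be empty) *)
Definition partition4 (A B S T : {set V}) : Prop :=
  [&& [disjoint A & B], [disjoint A & S], [disjoint A & T],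
      [disjoint B & S], [disjoint B & T] & [disjoint S & T]] /\
  A :|: B :|: S :|: T = setT.

Definition extremal (eps : R) : Prop :=
  exists A B S T : {set V}, partition4 A B S T /\
    (Rabs (INR #|A| - INR #|B|) <= 1) /\
    (Rabs (INR #|S| - INR #|T|) <= 1) /\
    (INR (eXY (A :|: S) (A :|: T)) < eps * nR ^ 2).

Definition all_but (X : {set V}) (k : R) (P : V -> Prop) : Prop :=
  exists Y : {set V}, Y \subset X /\ (INR #|Y| <= k) /\
    forall x, x \in X -> x \notin Y -> P x.

Definition dpm_ge (X : {set V}) (x : V) (c : R) : Prop :=
  (c <= INR (dout X x)) /\ (c <= INR (din X x)).
End Digraph.

Definition min_semideg_ge (V : finType) (U : {set V}) (F : rel V) (c : R) : Prop :=
  forall x, x \in U ->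
    (c <= INR #|[set y in U | F x y]|) /\ (c <= INR #|[set y in U | F y x]|).

Definition bip_rel (V : finType) (E : rel V) (X Y : {set V}) : rel V :=
  fun x y => E x y && (((x \in X) && (y \in Y)) || ((x \in Y) && (y \in X))).

Definition sub_semideg_ge (V : finType) (E : rel V) (X : {set V}) (c : R) :=
  min_semideg_ge X E c.
Definition bip_semideg_ge (V : finType) (E : rel V) (X Y : {set V}) (c : R) :=
  min_semideg_ge (X :|: Y) (bip_rel E X Y) c.

Section Conditions.
Variables (V : finType) (E : rel V) (A B S T : {set V}).
Let n := nR V.
Let a := INR #|A|.
Let b := INR #|B|.
Let s := INR #|S|.
Let t := INR #|T|.
Let nfl := INR (#|V|./2).
Let ncl := INR (uphalf #|V|).

Definition condP (eps3 eta2 : R) : Prop :=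
  (nfl - eps3 * n <= s <= ncl + eps3 * n) /\
  (nfl - eps3 * n <= t <= ncl + eps3 * n) /\
  sub_semideg_ge E S (eta2 * n) /\ sub_semideg_ge E T (eta2 * n) /\
  all_but S (eps3 * n) (fun x => dpm_ge E S x (n / 2 - eps3 * n)) /\
  all_but T (eps3 * n) (fun x => dpm_ge E T x (n / 2 - eps3 * n)) /\
  (a + b <= eps3 * n) /\
  (forall x, x \in A ->
     (n / 2 - 3 * eta2 * n < INR (din E T x)) /\
     (n / 2 - 3 * eta2 * n < INR (dout E S x)) /\
     (INR (din E S x) <= 3 * eta2 * n) /\
     (INR (dout E T x) <= 3 * eta2 * n)) /\
  (forall x, x \in B ->
     (n / 2 - 3 * eta2 * n < INR (din E S x)) /\
     (n / 2 - 3 * eta2 * n < INR (dout E T x)) /\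
     (INR (din E T x) <= 3 * eta2 * n) /\
     (INR (dout E S x) <= 3 * eta2 * n)).

Definition condQ (eps3 : R) : Prop :=
  (nfl - eps3 * n <= a <= ncl + eps3 * n) /\
  (nfl - eps3 * n <= b <= ncl + eps3 * n) /\
  bip_semideg_ge E A B (n / 50) /\
  all_but A (eps3 * n) (fun x => dpm_ge E B x (n / 2 - eps3 * n)) /\
  all_but B (eps3 * n) (fun x => dpm_ge E A x (n / 2 - eps3 * n)) /\
  (s + t <= eps3 * n) /\
  (forall x, x \in S ->
     (n / 50 <= INR (din E A x)) /\ (n / 50 <= INR (dout E B x))) /\
  (forall x, x \in T ->
     (n / 50 <= INR (din E B x)) /\ (n / 50 <= INR (dout E A x))) /\
  ((a < b) ->
     (forall x, x \in B ->
        (INR (dout E B x) < n / 20) /\ (INR (din E B x) < n / 20)) /\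
     (forall x, x \in S -> (INR (din E B x) < n / 20)) /\
     (forall x, x \in T -> (INR (dout E B x) < n / 20))).

Definition condR (eps eps1 eta1 tau : R) : Prop :=
  let e13 := Rpower eps (1 / 3) in
  (tau * n <= a) /\ (tau * n <= b) /\ (tau * n <= s) /\ (tau * n <= t) /\
  (Rabs (a - b) <= eps1 * n) /\ (Rabs (s - t) <= eps1 * n) /\
  bip_semideg_ge E A B (eta1 * n) /\
  (forall x, x \in S ->
     (eta1 * n <= INR (dout E (B :|: S) x)) /\
     (eta1 * n <= INR (din E (A :|: S) x))) /\
  (forall x, x \in T ->
     (eta1 * n <= INR (dout E (A :|: T) x)) /\
     (eta1 * n <= INR (din E (B :|: T) x))) /\
  all_but A (eps1 * n) (fun x => dpm_ge E B x (b - e13 * n)) /\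
  all_but B (eps1 * n) (fun x => dpm_ge E A x (a - e13 * n)) /\
  all_but S (eps1 * n) (fun x =>
     (b + s - e13 * n <= INR (dout E (B :|: S) x)) /\
     (a + s - e13 * n <= INR (din E (A :|: S) x))) /\
  all_but T (eps1 * n) (fun x =>
     (a + t - e13 * n <= INR (dout E (A :|: T) x)) /\
     (b + t - e13 * n <= INR (din E (B :|: T) x))).
End Conditions.

From Stdlib Require Import Reals Lra Lia Classical.
From mathcomp Require Import all_boot zify.
Local Open Scope R_scope.
Set Implicit Arguments.
Unset Strict Implicit.
Unset Printing Implicit Defensive.

(* By extremality there is a balanced partition A, B, S, T with few edges
   from A u S to A u T.  Together with the semidegree bound this makes all but
   O(eps^(2/3) n) vertices typical: each misses at most eps^(1/3) n / 4 of the
   neighbours it would have if every edge leaving A u S entered B u S and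
   every edge leaving B u T entered A u T.  The conclusion then depends on
   which blocks are small.  If A (hence B) is small, the vertices of A, B and
   the atypical ones are sorted into S, T, A or B according to their degrees,
   giving (P1)-(P7).  If S (hence T) is small, the symmetric sorting gives
   (Q1)-(Q7) with some slack; vertices are then moved out of B, or from S u T
   into A, one at a time until |A| = |B| or (Q8) holds, each move reducing
   |B| - |A| by one and consuming one unit of slack.  If all four blocks are
   large, relabelling only the atypical vertices gives (R1)-(R9). *)

Section Counting.
Variables (V : finType) (E : rel V).

Definition nonout (X : {set V}) x := #|[set y in X | ~~ E x y]|.
Definition nonin (X : {set V}) y := #|[set x in X | ~~ E x y]|.

Lemma card_sep_sum (X : {set V}) (p : pred V) :
  #|[set y in X | p y]| = (\sum_(y in X) p y)%N.
Proof.
rewrite -sum1_card big_mkcond [RHS]big_mkcond /=.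
by apply: eq_bigr => y _; rewrite !inE; case: (y \in X); case: (p y).
Qed.

Lemma dout_nonout X x : (dout E X x + nonout X x)%N = #|X|.
Proof.
rewrite /dout /nonout !card_sep_sum -big_split /= -sum1_card.
by apply: eq_bigr => y _; case: (E x y).
Qed.

Lemma din_nonin X x : (din E X x + nonin X x)%N = #|X|.
Proof.
rewrite /din /nonin !card_sep_sum -big_split /= -sum1_card.
by apply: eq_bigr => y _; case: (E y x).
Qed.

Lemma card_sep_setD (X Y : {set V}) (p : pred V) :
  (#|[set y in Y | p y]| <= #|[set y in X | p y]| + #|Y :\: X|)%N.
Proof.
apply: leq_trans (leq_card_setU _ _).
apply: subset_leq_card; apply/subsetP=> y; rewrite !inE.
by case/andP=> -> ->; rewrite andbT orbC; case: (y \in X).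
Qed.

Lemma card_setD (X Y : {set V}) : (#|Y| <= #|X| + #|Y :\: X|)%N.
Proof.
apply: leq_trans (leq_card_setU _ _).
apply: subset_leq_card; apply/subsetP=> y; rewrite !inE.
by move=> ->; rewrite andbT orbC; case: (y \in X).
Qed.

Lemma sum_nonout_nonin (P Q : {set V}) :
  (\sum_(x in P) nonout Q x)%N = (\sum_(y in Q) nonin P y)%N.
Proof.
under eq_bigr do rewrite /nonout card_sep_sum.
rewrite exchange_big /=.
by under [RHS]eq_bigr do rewrite /nonin card_sep_sum.
Qed.

Lemma sum_dout_din (P Q : {set V}) :
  (\sum_(x in P) dout E Q x)%N = (\sum_(y in Q) din E P y)%N.
Proof.
under eq_bigr do rewrite /dout card_sep_sum.
rewrite exchange_big /=.
by under [RHS]eq_bigr do rewrite /din card_sep_sum.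
Qed.

Lemma sum_dout_eXY (X Y : {set V}) : (\sum_(x in X) dout E Y x)%N = eXY E X Y.
Proof.
rewrite /eXY /dout -sum1_card.
under eq_bigr do rewrite card_sep_sum.
pose F x y := ([&& x \in X, y \in Y & E x y] : nat).
transitivity (\sum_(p : V * V) F p.1 p.2)%N; last first.
  rewrite [RHS]big_mkcond /=.
  by apply: eq_bigr => -[x y] _; rewrite !inE /F /=; case: ([&& _, _ & _]).
rewrite -(pair_bigA _ F) /= [LHS]big_mkcond /=; apply: eq_bigr => x _.
case xX: (x \in X); last by rewrite big1 // => y _; rewrite /F xX.
by rewrite big_mkcond /=; apply: eq_bigr => y _; rewrite /F xX /=; case: (y \in Y).
Qed.

End Counting.

Lemma card_mul_le_sum (V : finType) (A : {set V}) (q : V -> nat) (t : R) :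
  (forall x, x \in A -> t < INR (q x)) -> INR #|A| * t <= INR (\sum_(x in A) q x).
Proof.
move=> qA; rewrite -sum1_card.
apply: (big_rec2 (fun a b => INR a * t <= INR b)); first by simpl; lra.
by move=> i y1 y2 iA IH; rewrite !plus_INR /=; have := qA i iA; lra.
Qed.

Lemma leq_INR (m k : nat) : (m <= k)%N -> INR m <= INR k.
Proof. by move/leP; apply: le_INR. Qed.

Lemma half_boundsR (k : nat) :
  INR k / 2 - 1/2 <= INR k./2 <= INR k / 2 /\
  INR k / 2 <= INR (uphalf k) <= INR k / 2 + 1/2.
Proof.
have ho : 0 <= INR (odd k) <= 1 by case: (odd k) => /=; lra.
have e1 : INR (odd k) + (INR k./2 + INR k./2) = INR k.
  by rewrite -!plus_INR -[in RHS](odd_double_half k) -addnn.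
have e2 : INR (uphalf k) = INR (odd k) + INR k./2 by rewrite uphalf_half plus_INR.
lra.
Qed.

Definition Rleb (a b : R) : bool := if Rle_dec a b then true else false.

Lemma RlebP a b : reflect (a <= b) (Rleb a b).
Proof. by rewrite /Rleb; case: Rle_dec => h; constructor. Qed.

Section Blocks.
Variables (V : finType) (E : rel V).

(* A labelling [f : V -> nat] with values below 4 encodes the partition
   A, B, S, T of the paper as [block f 0], ..., [block f 3]. *)
Definition block (f : V -> nat) (k : nat) := [set x | f x == k].
Definition dout_blk f (k : nat) x := dout E (block f k) x.
Definition din_blk f (k : nat) x := din E (block f k) x.

Lemma in_block (f : V -> nat) k x : (x \in block f k) = (f x == k).
Proof. by rewrite inE. Qed.

Lemma card_sep_sumT (X : {set V}) (p : pred V) :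
  #|[set y in X | p y]| = (\sum_y ((y \in X) && p y : nat))%N.
Proof.
by rewrite card_sep_sum big_mkcond /=; apply: eq_bigr => y _; case: (y \in X).
Qed.

Lemma card_sumT (X : {set V}) : #|X| = (\sum_y ((y \in X) : nat))%N.
Proof.
rewrite -[X in LHS]setIT -[X :&: _]setIdE card_sep_sumT.
by apply: eq_bigr => y _; rewrite andbT.
Qed.

Lemma dout_blkU f i j x : i != j ->
  dout E (block f i :|: block f j) x = (dout_blk f i x + dout_blk f j x)%N.
Proof.
move=> ij; rewrite /dout_blk /dout !card_sep_sumT -big_split /=.
apply: eq_bigr => y _; rewrite !inE; case: (E x y); rewrite ?andbF ?andbT //.
case Hi: (f y == i); case Hj: (f y == j) => //=.
by move: ij; rewrite -(eqP Hi) -(eqP Hj) eqxx.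
Qed.

Lemma din_blkU f i j x : i != j ->
  din E (block f i :|: block f j) x = (din_blk f i x + din_blk f j x)%N.
Proof.
move=> ij; rewrite /din_blk /din !card_sep_sumT -big_split /=.
apply: eq_bigr => y _; rewrite !inE; case: (E y x); rewrite ?andbF ?andbT //.
case Hi: (f y == i); case Hj: (f y == j) => //=.
by move: ij; rewrite -(eqP Hi) -(eqP Hj) eqxx.
Qed.

Lemma card_blkU f i j : i != j ->
  #|block f i :|: block f j| = (#|block f i| + #|block f j|)%N.
Proof.
move=> ij; rewrite !card_sumT -big_split /=; apply: eq_bigr => y _; rewrite !inE.
case Hi: (f y == i); case Hj: (f y == j) => //=.
by move: ij; rewrite -(eqP Hi) -(eqP Hj) eqxx.
Qed.

Section FourBlocks.
Variable f : V -> nat.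
Hypothesis f4 : forall x, (f x < 4)%N.

Lemma card_blk_sum :
  #|V| = (#|block f 0| + #|block f 1| + #|block f 2| + #|block f 3|)%N.
Proof.
rewrite -cardsT !card_sumT -!big_split /=; apply: eq_bigr => y _.
by rewrite !inE; move: (f4 y); case: (f y) => [|[|[|[|k]]]].
Qed.

Lemma dout_blk_sum x : dout E setT x =
  (dout_blk f 0 x + dout_blk f 1 x + dout_blk f 2 x + dout_blk f 3 x)%N.
Proof.
rewrite /dout_blk /dout !card_sep_sumT -!big_split /=; apply: eq_bigr => y _.
rewrite !inE; case: (E x y); rewrite ?andbF ?andbT //.
by move: (f4 y); case: (f y) => [|[|[|[|k]]]].
Qed.

Lemma din_blk_sum x : din E setT x =
  (din_blk f 0 x + din_blk f 1 x + din_blk f 2 x + din_blk f 3 x)%N.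
Proof.
rewrite /din_blk /din !card_sep_sumT -!big_split /=; apply: eq_bigr => y _.
rewrite !inE; case: (E y x); rewrite ?andbF ?andbT //.
by move: (f4 y); case: (f y) => [|[|[|[|k]]]].
Qed.

Lemma partition4_blocks :
  partition4 (block f 0) (block f 1) (block f 2) (block f 3).
Proof.
split.
  by rewrite !disjoint_subset; repeat (apply/andP; split);
     apply/subsetP=> y; rewrite !inE => /eqP->.
by apply/setP=> y; rewrite !inE; move: (f4 y); case: (f y) => [|[|[|[|k]]]].
Qed.

End FourBlocks.

Lemma partition4_labelling (A B S T : {set V}) : partition4 A B S T ->
  exists f : V -> nat, (forall x, f x < 4)%N /\
    A = block f 0 /\ B = block f 1 /\ S = block f 2 /\ T = block f 3.
Proof.
move=> [/andP[dAB /andP[dAS /andP[dAT /andP[dBS /andP[dBT dST]]]]] cov].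
exists (fun x => if x \in A then 0 else if x \in B then 1 else if x \in S then 2 else 3)%N.
split; first by move=> x; do 3 case: ifP => //.
have inT x : [|| x \in A, x \in B, x \in S | x \in T].
  by have : x \in [set: V] by []; rewrite -cov !inE -!orbA.
have disj (X Y : {set V}) x : [disjoint X & Y] -> x \in X -> x \in Y -> False.
  by rewrite disjoint_subset => /subsetP XY /XY; rewrite inE => /negP.
split; [|split; [|split]]; apply/setP=> x; rewrite inE; move: (inT x);
  case xA: (x \in A); case xB: (x \in B); case xS: (x \in S); case xT: (x \in T) => //=;
  solve [ by case: (disj _ _ _ dAB xA xB) | by case: (disj _ _ _ dAS xA xS)
        | by case: (disj _ _ _ dAT xA xT) | by case: (disj _ _ _ dBS xB xS)
        | by case: (disj _ _ _ dBT xB xT) | by case: (disj _ _ _ dST xS xT) ].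
Qed.

Section Relabel.
Variables (f g : V -> nat) (D : {set V}).
Hypothesis fg : forall x, x \notin D -> f x = g x.

Lemma card_blk_setD k : (#|block g k :\: block f k| <= #|D|)%N.
Proof.
apply: subset_leq_card; apply/subsetP=> y; rewrite !inE.
by case yD: (y \in D) => //; rewrite fg ?yD // => /andP[/negP].
Qed.

Lemma dout_blk_relabel k x : (dout_blk g k x <= dout_blk f k x + #|D|)%N.
Proof.
apply: leq_trans (card_sep_setD (block f k) (block g k) (E x)) _.
by rewrite leq_add2l card_blk_setD.
Qed.

Lemma din_blk_relabel k x : (din_blk g k x <= din_blk f k x + #|D|)%N.
Proof.
apply: leq_trans (card_sep_setD (block f k) (block g k) (E^~ x)) _.
by rewrite leq_add2l card_blk_setD.
Qed.

Lemma card_blk_relabel k : (#|block g k| <= #|block f k| + #|D|)%N.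
Proof. by apply: leq_trans (card_setD (block f k) _) _; rewrite leq_add2l card_blk_setD. Qed.

End Relabel.

Section RelabelR.
Variables (f g : V -> nat) (D : {set V}).
Hypothesis fg : forall x, x \notin D -> f x = g x.

Let gf : forall x, x \notin D -> g x = f x.
Proof. by move=> x /fg. Qed.

Lemma relabel_cardR k :
  INR #|block g k| - INR #|D| <= INR #|block f k| <= INR #|block g k| + INR #|D|.
Proof.
have := leq_INR (card_blk_relabel fg k); have := leq_INR (card_blk_relabel gf k).
rewrite !plus_INR; lra.
Qed.

Lemma relabel_degR k x :
  INR (dout_blk g k x) - INR #|D| <= INR (dout_blk f k x) <= INR (dout_blk g k x) + INR #|D| /\
  INR (din_blk g k x) - INR #|D| <= INR (din_blk f k x) <= INR (din_blk g k x) + INR #|D|.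
Proof.
have := leq_INR (dout_blk_relabel fg k x); have := leq_INR (dout_blk_relabel gf k x).
have := leq_INR (din_blk_relabel fg k x); have := leq_INR (din_blk_relabel gf k x).
rewrite !plus_INR; lra.
Qed.

End RelabelR.

Lemma dout_blkR f k x : 0 <= INR (dout_blk f k x) <= INR #|block f k|.
Proof.
split; first exact: pos_INR.
by apply/leq_INR/subset_leq_card; apply/subsetP=> y; rewrite inE => /andP[].
Qed.

Lemma din_blkR f k x : 0 <= INR (din_blk f k x) <= INR #|block f k|.
Proof.
split; first exact: pos_INR.
by apply/leq_INR/subset_leq_card; apply/subsetP=> y; rewrite inE => /andP[].
Qed.

Lemma nonout_blkU f i j x : i != j ->
  INR (nonout E (block f i :|: block f j) x) =
  INR #|block f i| + INR #|block f j| - INR (dout_blk f i x) - INR (dout_blk f j x).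
Proof.
move=> ij; have := dout_nonout E (block f i :|: block f j) x.
rewrite dout_blkU // card_blkU // => /(congr1 INR); rewrite !plus_INR; lra.
Qed.

Lemma nonin_blkU f i j x : i != j ->
  INR (nonin E (block f i :|: block f j) x) =
  INR #|block f i| + INR #|block f j| - INR (din_blk f i x) - INR (din_blk f j x).
Proof.
move=> ij; have := din_nonin E (block f i :|: block f j) x.
rewrite din_blkU // card_blkU // => /(congr1 INR); rewrite !plus_INR; lra.
Qed.

Lemma card_blk_sumR f : (forall x, f x < 4)%N ->
  nR V = INR #|block f 0| + INR #|block f 1| + INR #|block f 2| + INR #|block f 3|.
Proof. by move=> f4; rewrite /nR (card_blk_sum f4) !plus_INR. Qed.

Lemma semideg_blk_sumR f x : (forall x, f x < 4)%N ->
  (#|V| <= 2 * dout E setT x)%N -> (#|V| <= 2 * din E setT x)%N ->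
  nR V / 2 <= INR (dout_blk f 0 x) + INR (dout_blk f 1 x)
              + INR (dout_blk f 2 x) + INR (dout_blk f 3 x) /\
  nR V / 2 <= INR (din_blk f 0 x) + INR (din_blk f 1 x)
              + INR (din_blk f 2 x) + INR (din_blk f 3 x).
Proof.
move=> f4 /leq_INR hout /leq_INR hin.
rewrite (dout_blk_sum f4) mult_INR !plus_INR in hout.
rewrite (din_blk_sum f4) mult_INR !plus_INR in hin.
have two : INR 2 = 2 by simpl; lra.
by rewrite /nR; rewrite two in hout hin; split; lra.
Qed.

Lemma bip_deg_A h x : h x = 0%N ->
  #|[set y in block h 0 :|: block h 1 | bip_rel E (block h 0) (block h 1) x y]| = dout_blk h 1 x /\
  #|[set y in block h 0 :|: block h 1 | bip_rel E (block h 0) (block h 1) y x]| = din_blk h 1 x.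
Proof.
move=> hx; split; apply: eq_card => y; rewrite !inE /bip_rel !inE hx /=;
  case: (h y) => [|[|k]] /=; rewrite ?andbF ?andbT //.
Qed.

Lemma bip_deg_B h x : h x = 1%N ->
  #|[set y in block h 0 :|: block h 1 | bip_rel E (block h 0) (block h 1) x y]| = dout_blk h 0 x /\
  #|[set y in block h 0 :|: block h 1 | bip_rel E (block h 0) (block h 1) y x]| = din_blk h 0 x.
Proof.
move=> hx; split; apply: eq_card => y; rewrite !inE /bip_rel !inE hx /=;
  case: (h y) => [|[|k]] /=; rewrite ?andbF ?andbT ?orbF //.
Qed.

End Blocks.

Section ExtremalStructure.
Variables (V : finType) (E : rel V) (g : V -> nat).

Definition AS := block g 0 :|: block g 2.
Definition AT := block g 0 :|: block g 3.
Definition BS := block g 1 :|: block g 2.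
Definition BT := block g 1 :|: block g 3.

Hypothesis g4 : forall x, (g x < 4)%N.
Hypothesis b01 : (#|block g 0| <= #|block g 1| + 1)%N.
Hypothesis b10 : (#|block g 1| <= #|block g 0| + 1)%N.
Hypothesis b23 : (#|block g 2| <= #|block g 3| + 1)%N.
Hypothesis b32 : (#|block g 3| <= #|block g 2| + 1)%N.
Hypothesis dego : forall x, (#|V| <= 2 * dout E setT x)%N.
Hypothesis degi : forall x, (#|V| <= 2 * din E setT x)%N.

(* [BS] is the complement of [AT] and has at most [n/2 + 1] vertices, so a
   vertex of outdegree at least [n/2] misses few of [BS] unless it sends many
   edges into [AT]. *)
Lemma nonout_BS_le x : (nonout E BS x <= 1 + dout E AT x)%N.
Proof.
have := dout_nonout E BS x; have := dego x.
rewrite /BS /AT !dout_blkU // card_blkU // (dout_blk_sum E g4) (card_blk_sum g4).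
lia.
Qed.

Lemma nonin_BT_le x : (nonin E BT x <= 1 + din E AS x)%N.
Proof.
have := din_nonin E BT x; have := degi x.
rewrite /BT /AS !din_blkU // card_blkU // (din_blk_sum E g4) (card_blk_sum g4).
lia.
Qed.

Lemma sum_nonout_BS : (\sum_(x in AS) nonout E BS x <= #|AS| + eXY E AS AT)%N.
Proof.
rewrite -sum_dout_eXY -sum1_card -big_split /=.
by apply: leq_sum => x _; apply: nonout_BS_le.
Qed.

Lemma sum_nonin_BT : (\sum_(x in AT) nonin E BT x <= #|AT| + eXY E AS AT)%N.
Proof.
rewrite -sum_dout_eXY sum_dout_din -sum1_card -big_split /=.
by apply: leq_sum => x _; apply: nonin_BT_le.
Qed.

(* [x] is typical if it misses at most [t] of the neighbours it would have in
   the extremal configuration, where every edge leaving [A u S] enters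
   [B u S] and every edge leaving [B u T] enters [A u T]. *)
Definition typical (t : R) x :=
  (x \in AS -> INR (nonout E BS x) <= t) /\ (x \in BT -> INR (nonout E AT x) <= t) /\
  (x \in AT -> INR (nonin E BT x) <= t) /\ (x \in BS -> INR (nonin E AS x) <= t).

Variable t : R.

Definition exceeding (X : {set V}) (q : V -> nat) := [set x in X | ~~ Rleb (INR (q x)) t].

Definition atypical :=
  exceeding AS (nonout E BS) :|: exceeding BT (nonout E AT) :|:
  exceeding AT (nonin E BT) :|: exceeding BS (nonin E AS).

Lemma typical_notin_atypical x : x \notin atypical -> typical t x.
Proof.
rewrite !in_setU !negb_or => /andP[/andP[/andP[h1 h2] h3] h4].
by split; [|split; [|split]] => hx;
  [move: h1|move: h2|move: h3|move: h4]; rewrite in_set hx negbK => /RlebP.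
Qed.

Lemma card_exceeding (X : {set V}) (q : V -> nat) :
  INR #|exceeding X q| * t <= INR (\sum_(x in X) q x).
Proof.
apply: Rle_trans (@card_mul_le_sum _ _ q t _) _.
  by move=> x; rewrite inE => /andP[_ /RlebP/Rnot_le_lt].
apply/leq_INR/sub_le_big => [//|m k|x]; [exact: leq_addr | by rewrite inE => /andP[]].
Qed.

Lemma card_atypical :
  0 <= t -> INR #|atypical| * t <= 2 * INR (#|AS| + #|AT| + 2 * eXY E AS AT).
Proof.
move=> t0.
have e1 := card_exceeding AS (nonout E BS).
have e2 := card_exceeding BT (nonout E AT); rewrite sum_nonout_nonin in e2.
have e3 := card_exceeding AT (nonin E BT).
have e4 := card_exceeding BS (nonin E AS); rewrite -sum_nonout_nonin in e4.
have r1 := leq_INR sum_nonout_BS.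
have r2 := leq_INR sum_nonin_BT.
have cU : (#|atypical| <= #|exceeding AS (nonout E BS)| + #|exceeding BT (nonout E AT)|
            + #|exceeding AT (nonin E BT)| + #|exceeding BS (nonin E AS)|)%N.
  apply: leq_trans (leq_card_setU _ _) _; rewrite leq_add2r.
  apply: leq_trans (leq_card_setU _ _) _; rewrite leq_add2r.
  exact: leq_card_setU.
have := Rmult_le_compat_r t _ _ t0 (leq_INR cU).
rewrite !plus_INR in r1 r2 *; change (INR 0) with 0; lra.
Qed.

Section TypicalDegrees.
Variable x : V.
Hypothesis xt : typical t x.
Let c k := INR #|block g k|.
Let dO k := INR (dout_blk E g k x).
Let dI k := INR (din_blk E g k x).

Lemma typical_A : g x = 0%N -> c 1 + c 2 - dO 1 - dO 2 <= t /\ c 1 + c 3 - dI 1 - dI 3 <= t.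
Proof.
move=> gx; have [h1 [_ [h3 _]]] := xt; rewrite /AS /AT !inE gx /= in h1 h3.
by have := h1 erefl; have := h3 erefl; rewrite nonout_blkU // nonin_blkU.
Qed.

Lemma typical_B : g x = 1%N -> c 0 + c 3 - dO 0 - dO 3 <= t /\ c 0 + c 2 - dI 0 - dI 2 <= t.
Proof.
move=> gx; have [_ [h2 [_ h4]]] := xt; rewrite /BT /BS !inE gx /= in h2 h4.
by have := h2 erefl; have := h4 erefl; rewrite nonout_blkU // nonin_blkU.
Qed.

Lemma typical_S : g x = 2%N -> c 1 + c 2 - dO 1 - dO 2 <= t /\ c 0 + c 2 - dI 0 - dI 2 <= t.
Proof.
move=> gx; have [h1 [_ [_ h4]]] := xt; rewrite /AS /BS !inE gx /= in h1 h4.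
by have := h1 erefl; have := h4 erefl; rewrite nonout_blkU // nonin_blkU.
Qed.

Lemma typical_T : g x = 3%N -> c 0 + c 3 - dO 0 - dO 3 <= t /\ c 1 + c 3 - dI 1 - dI 3 <= t.
Proof.
move=> gx; have [_ [h2 [h3 _]]] := xt; rewrite /BT /AT !inE gx /= in h2 h3.
by have := h2 erefl; have := h3 erefl; rewrite nonout_blkU // nonin_blkU.
Qed.

End TypicalDegrees.
End ExtremalStructure.

Section SetLabel.
Variables (V : finType) (E : rel V).

Definition setlabel (h : V -> nat) (v : V) (j : nat) := fun x => if x == v then j else h x.

Lemma setlabel_out h v j x : x \notin [set v] -> setlabel h v j x = h x.
Proof. by rewrite inE /setlabel => /negbTE ->. Qed.

Lemma card_blk_setlabel h v j l :
  (#|block (setlabel h v j) l| + (h v == l) = #|block h l| + (j == l))%N.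
Proof.
rewrite !card_sumT (bigD1 v) //= [X in (_ = X + _)%N](bigD1 v) //=.
rewrite !inE /setlabel eqxx.
have -> : (\sum_(i | i != v) ((i \in block (fun x => if x == v then j else h x) l) : nat) =
          \sum_(i | i != v) ((i \in block h l) : nat))%N.
  by apply: eq_bigr => y /negbTE yv; rewrite !inE yv.
lia.
Qed.

End SetLabel.

Lemma all_but_mono (V : finType) (X : {set V}) k k' (P P' : V -> Prop) :
  all_but X k P -> k <= k' -> (forall x, x \in X -> P x -> P' x) -> all_but X k' P'.
Proof.
move=> [Y [sY [cY hY]]] kk' PP'; exists Y; split => //; split; first lra.
move=> x xX xY; apply: PP' => //; exact: hY.
Qed.

Lemma all_but_setD (V : finType) (X D : {set V}) (k : R) (P : V -> Prop) :
  INR #|D| <= k -> (forall x, x \in X -> x \notin D -> P x) -> all_but X k P.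
Proof.
move=> cD PXD; exists (X :&: D); split; first exact: subsetIl.
split; first by apply: Rle_trans cD; apply/leq_INR/subset_leq_card/subsetIr.
by move=> x xX; rewrite in_setI xX; apply: PXD.
Qed.

Section Balance.
Variables (V : finType) (E : rel V).
Variables (eps3 Kmax W W2 M L U : R).
Hypothesis hK : 0 <= Kmax /\ Kmax + 1 <= 3 * nR V / 100.
Hypothesis hW : W <= eps3 * nR V.
Hypothesis hW2 : W2 <= eps3 * nR V.
Hypothesis hM : nR V / 2 - eps3 * nR V <= M.
Hypothesis hL : nR V / 2 - eps3 * nR V <= L.
Hypothesis hU : U <= nR V / 2 + eps3 * nR V.

(* [x] has at least [d] neighbours of each kind that (Q2), (Q6) and (Q7)
   require of a vertex of block [cl]. *)
Definition label_deg (cl : nat) (h : V -> nat) (d : R) x :=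
  (cl = 0%N -> d <= INR (dout E (block h 1) x) /\ d <= INR (din E (block h 1) x)) /\
  (cl = 1%N -> d <= INR (dout E (block h 0) x) /\ d <= INR (din E (block h 0) x)) /\
  (cl = 2%N -> d <= INR (din E (block h 0) x) /\ d <= INR (dout E (block h 1) x)) /\
  (cl = 3%N -> d <= INR (din E (block h 1) x) /\ d <= INR (dout E (block h 0) x)).

Definition deg_ok (h : V -> nat) (d : R) x := label_deg (h x) h d x.

(* The invariant of the balancing procedure, where [k = |B| - |A|]: every
   bound carries a slack of [k], so that a balancing move, which perturbs all
   degrees and sizes by at most one, preserves it with [k - 1]. *)
Definition balance_inv (h : V -> nat) (k : nat) :=
  (forall x, h x < 4)%N /\ (#|block h 0| + k = #|block h 1|)%N /\ INR k <= Kmax /\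
  L <= INR #|block h 0| /\ INR #|block h 1| <= U /\
  (forall x, deg_ok h (nR V / 50 + INR k) x) /\
  INR #|block h 2| + INR #|block h 3| + INR k <= W /\
  all_but (block h 0) (W2 - INR k) (fun x => dpm_ge E (block h 1) x (M + INR k)) /\
  all_but (block h 1) (W2 - INR k) (fun x => dpm_ge E (block h 0) x (M + INR k)).

Definition B_sparse (h : V -> nat) :=
  (forall x, h x = 1%N ->
     INR (dout E (block h 1) x) < nR V / 20 /\ INR (din E (block h 1) x) < nR V / 20) /\
  (forall x, h x = 2%N -> INR (din E (block h 1) x) < nR V / 20) /\
  (forall x, h x = 3%N -> INR (dout E (block h 1) x) < nR V / 20).

Lemma balance_inv_condQ h k : balance_inv h k -> (k = 0%N \/ B_sparse h) ->
  condQ E (block h 0) (block h 1) (block h 2) (block h 3) eps3 /\ (#|block h 0| <= #|block h 1|)%N.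
Proof.
move=> [h4 [hk [hKk [hLa [hUb [hc [hst [hA hB]]]]]]]] hfin.
have [hh1 hh2] := half_boundsR #|V|. rewrite -/(nR V) in hh1 hh2.
have k0 := pos_INR k.
have hab : INR #|block h 0| + INR k = INR #|block h 1| by rewrite -hk plus_INR.
have := (pos_INR #|block h 2|, pos_INR #|block h 3|); move=> [? ?].
split; last by rewrite -hk leq_addr.
rewrite /condQ.
split; first lra. split; first lra.
split.
  move=> x; rewrite in_setU !in_block => /orP[] /eqP hx.
    have [-> ->] := bip_deg_A E hx; have [hc0 _] := hc x; have := hc0 hx.
    by rewrite /dout_blk /din_blk; lra.
  have [-> ->] := bip_deg_B E hx; have [_ [hc1 _]] := hc x; have := hc1 hx.
  by rewrite /dout_blk /din_blk; lra.
split.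
  apply: all_but_mono hA _ _; first lra.
  by move=> x _ [p1 p2]; split; lra.
split.
  apply: all_but_mono hB _ _; first lra.
  by move=> x _ [p1 p2]; split; lra.
split; first lra.
split.
  move=> x; rewrite in_block => /eqP hx; have [_ [_ [hc2 _]]] := hc x; have := hc2 hx; lra.
split.
  move=> x; rewrite in_block => /eqP hx; have [_ [_ [_ hc3]]] := hc x; have := hc3 hx; lra.
move=> hlt; case: hfin => [k0'|[q1 [q2 q3]]].
  by rewrite k0' /= in hab; lra.
split; [|split] => x; rewrite in_block => /eqP hx; [exact: q1|exact: q2|exact: q3].
Qed.

Lemma label_deg_setlabel cl (h : V -> nat) v j d x :
  label_deg cl h (d + 1) x -> label_deg cl (setlabel h v j) d x.
Proof.
move=> [c0 [c1 [c2 c3]]].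
have hh' := @setlabel_out _ h v j.
have q0 := relabel_degR E hh' 0 x; have q1 := relabel_degR E hh' 1 x.
rewrite cards1 /dout_blk /din_blk /= in q0 q1.
split; [|split; [|split]] => e;
  [have := c0 e|have := c1 e|have := c2 e|have := c3 e]; lra.
Qed.

Lemma all_but_setlabel (h : V -> nat) v j l m w c :
  all_but (block h l) w (fun x => dpm_ge E (block h m) x (c + 1)) ->
  all_but (block (setlabel h v j) l) (w + 1)
    (fun x => dpm_ge E (block (setlabel h v j) m) x c).
Proof.
case=> [Y [_ [cY hY]]]; set h' := setlabel h v j.
exists ((Y :|: [set v]) :&: block h' l); split; first exact: subsetIr.
split.
  have := leq_INR (subset_leq_card (subsetIl (Y :|: [set v]) (block h' l))).
  by have := leq_INR (leq_card_setU Y [set v]); rewrite cards1 plus_INR /=; lra.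
move=> x xl; rewrite in_setI xl andbT in_setU negb_or => /andP[xY].
rewrite in_set1 => xv; have hx : h' x = h x by rewrite /h' /setlabel (negbTE xv).
have xl0 : x \in block h l by rewrite in_block -hx -in_block.
have [p1 p2] := hY x xl0 xY.
have := relabel_degR E (@setlabel_out _ h v j) m x.
by rewrite cards1 /dout_blk /din_blk /dpm_ge /h' /=; lra.
Qed.

(* A balancing move relabels a vertex of [B] into [S u T], or a vertex of
   [S u T] into [A]; either way [|B| - |A|] drops by one. *)
Definition balancing_move (h : V -> nat) v j :=
  (h v = 1%N /\ (j = 2%N \/ j = 3%N)) \/ ((h v = 2%N \/ h v = 3%N) /\ j = 0%N).

Lemma card_blk_move h v j k : balancing_move h v j ->
  (#|block h 0| + k.+1 = #|block h 1|)%N ->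
  let h' := setlabel h v j in
  [/\ (#|block h' 0| + k = #|block h' 1|)%N, (#|block h 0| <= #|block h' 0|)%N,
      (#|block h' 1| <= #|block h 1|)%N &
      (#|block h' 2| + #|block h' 3| <= #|block h 2| + #|block h 3| + 1)%N].
Proof.
move=> hvj hk h'.
have m0 := card_blk_setlabel h v j 0; have m1 := card_blk_setlabel h v j 1.
have m2 := card_blk_setlabel h v j 2; have m3 := card_blk_setlabel h v j 3.
by case: hvj => [[hv [ej|ej]]|[[hv|hv] ej]]; subst j; rewrite hv in m0 m1 m2 m3;
  split; rewrite /h'; lia.
Qed.

Lemma balance_inv_move h k v j : balance_inv h k.+1 -> balancing_move h v j ->
  label_deg j h (nR V / 50 + INR k + 1) v -> balance_inv (setlabel h v j) k.
Proof.
move=> [h4 [hk [hKk [hLa [hUb [hc [hst [hA hB]]]]]]]] hvj hcv.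
have [e0 ca cb cst] := card_blk_move hvj hk.
set h' := setlabel h v j in e0 ca cb cst *.
rewrite S_INR in hKk hst hA hB; have k0 := pos_INR k.
have := leq_INR ca; have := leq_INR cb; have := leq_INR cst; rewrite !plus_INR /=.
move=> cst' cb' ca'; split.
  by move=> x; rewrite /h' /setlabel; case: (x == v) => //; case: hvj => [[_ [->|->]]|[_ ->]].
split; first exact: e0.
do 3 (split; first lra).
split.
  move=> x; rewrite /deg_ok; case xv: (x == v).
    by rewrite {1}/h' /setlabel xv; move/eqP: xv => ->; apply: label_deg_setlabel.
  rewrite {1}/h' /setlabel xv; apply: label_deg_setlabel; have := hc x.
  by rewrite /deg_ok S_INR Rplus_assoc.
split; first lra.
have eW : W2 - INR k = W2 - (INR k + 1) + 1 by lra.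
have eM : M + (INR k + 1) = M + INR k + 1 by lra.
by rewrite eW; split; apply: all_but_setlabel; rewrite -eM.
Qed.

Lemma exists_balancing_move h d :
  ~ B_sparse h -> d <= nR V / 20 -> (forall x, deg_ok h d x) ->
  exists v j, balancing_move h v j /\ label_deg j h d v.
Proof.
move=> nsparse dle hc.
have [v hv] : exists v,
  (h v = 1%N /\ nR V / 20 <= INR (dout E (block h 1) v)) \/
  (h v = 1%N /\ nR V / 20 <= INR (din E (block h 1) v)) \/
  (h v = 2%N /\ nR V / 20 <= INR (din E (block h 1) v)) \/
  (h v = 3%N /\ nR V / 20 <= INR (dout E (block h 1) v)).
  apply: NNPP => hne; apply: nsparse.
  split; [|split] => x hx; try split; apply: Rnot_le_lt => hle; apply: hne; exists x; tauto.
have [c0 [c1 [c2 c3]]] := hc v.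
case: hv => [[hv1 hb]|[[hv1 hb]|[[hv1 hb]|[hv1 hb]]]].
- exists v, 2%N; split; first by left; split; last left.
  have [p1 p2] := c1 hv1; split; [|split; [|split]] => // _; split; lra.
- exists v, 3%N; split; first by left; split; last right.
  have [p1 p2] := c1 hv1; split; [|split; [|split]] => // _; split; lra.
- exists v, 0%N; split; first by right; split; first left.
  have [p1 p2] := c2 hv1; split; [|split; [|split]] => // _; split; lra.
- exists v, 0%N; split; first by right; split; first right.
  have [p1 p2] := c3 hv1; split; [|split; [|split]] => // _; split; lra.
Qed.

Lemma balance_condQ k : forall h, balance_inv h k -> exists h', (forall x, h' x < 4)%N /\
  condQ E (block h' 0) (block h' 1) (block h' 2) (block h' 3) eps3 /\
  (#|block h' 0| <= #|block h' 1|)%N.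
Proof.
elim: k => [|k IH] h HI.
  by exists h; split; [exact: (proj1 HI) | exact: balance_inv_condQ HI (or_introl erefl)].
case: (classic (B_sparse h)) => sparse.
  by exists h; split; [exact: (proj1 HI) | exact: balance_inv_condQ HI (or_intror sparse)].
have [_ [_ [hKk [_ [_ [hc _]]]]]] := HI; rewrite S_INR in hKk hc.
have [|v [j [mv hv]]] := exists_balancing_move sparse _ hc.
  by have := pos_INR k; lra.
by apply: IH; apply: balance_inv_move HI mv _; rewrite -Rplus_assoc in hv.
Qed.

End Balance.

Definition swapAB (k : nat) : nat :=
  match k with 0 => 1 | 1 => 0 | 2 => 3 | 3 => 2 | _ => k end.

Section SwapAB.
Variables (V : finType) (E : rel V).

Lemma block_swapAB (h : V -> nat) :
  block (fun x => swapAB (h x)) 0 = block h 1 /\ block (fun x => swapAB (h x)) 1 = block h 0 /\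
  block (fun x => swapAB (h x)) 2 = block h 3 /\ block (fun x => swapAB (h x)) 3 = block h 2.
Proof.
split; [|split; [|split]]; apply/setP => x; rewrite !inE /swapAB;
  case: (h x) => [|[|[|[|k]]]] //=.
Qed.

(* The outcome of relabelling in case (Q), before [A] and [B] are balanced. *)
Definition nearQ (tau : R) (h : V -> nat) :=
  (forall x, h x < 4)%N /\
  nR V / 2 - 9 * tau * nR V <= INR #|block h 0| <= nR V / 2 + 7 * tau * nR V /\
  nR V / 2 - 9 * tau * nR V <= INR #|block h 1| <= nR V / 2 + 7 * tau * nR V /\
  (forall x, deg_ok E h (nR V / 40 - 6 * tau * nR V) x) /\
  INR #|block h 2| + INR #|block h 3| <= 6 * tau * nR V /\
  all_but (block h 0) (6 * tau * nR V)
    (fun x => dpm_ge E (block h 1) x (nR V / 2 - 10 * tau * nR V)) /\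
  all_but (block h 1) (6 * tau * nR V)
    (fun x => dpm_ge E (block h 0) x (nR V / 2 - 10 * tau * nR V)).

Lemma nearQ_swapAB tau h : nearQ tau h -> nearQ tau (fun x => swapAB (h x)).
Proof.
have [e0 [e1 [e2 e3]]] := block_swapAB h.
move=> [h4 [ha [hb [hc [hst [hA hB]]]]]].
rewrite /nearQ e0 e1 e2 e3.
split.
  by move=> x; rewrite /swapAB; move: (h4 x); case: (h x) => [|[|[|[|k]]]].
split; first exact: hb. split; first exact: ha.
split; last by split; [lra|split].
move=> x; have := hc x; rewrite /deg_ok /label_deg e0 e1 /swapAB.
move: (h4 x); case: (h x) => [|[|[|[|k]]]] //= _ [c0 [c1 [c2 c3]]];
  (split; [|split; [|split]]) => // _;
  solve [exact: (c0 erefl) | exact: (c1 erefl) | exact: (c2 erefl) | exact: (c3 erefl)].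
Qed.

Lemma nearQ_balance_inv tau h : 0 <= tau * nR V -> 10000 * (tau * nR V) <= nR V ->
  nearQ tau h -> (#|block h 0| <= #|block h 1|)%N ->
  balance_inv E (16 * tau * nR V) (22 * tau * nR V) (22 * tau * nR V)
    (nR V / 2 - 26 * tau * nR V) (nR V / 2 - 9 * tau * nR V)
    (nR V / 2 + 7 * tau * nR V) h (#|block h 1| - #|block h 0|).
Proof.
move=> tn tsm [h4 [ha [hb [hc [hst [hA hB]]]]]] hab.
have ek : (#|block h 0| + (#|block h 1| - #|block h 0|) = #|block h 1|)%N by lia.
have ek' : INR #|block h 0| + INR (#|block h 1| - #|block h 0|) = INR #|block h 1|
  by rewrite -[in RHS]ek plus_INR.
have k0 := pos_INR (#|block h 1| - #|block h 0|).
split; first exact: h4.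
split; first exact: ek.
split; first lra.
split; first lra.
split; first lra.
split.
  move=> x; have [c0 [c1 [c2 c3]]] := hc x.
  split; [|split; [|split]] => e;
    [have := c0 e|have := c1 e|have := c2 e|have := c3 e]; lra.
split; first lra.
split.
  apply: all_but_mono hA _ _; first lra.
  by move=> x _ [p1 p2]; split; lra.
apply: all_but_mono hB _ _; first lra.
by move=> x _ [p1 p2]; split; lra.
Qed.

Lemma nearQ_condQ eps3 tau h :
  100 * (tau * nR V) <= eps3 * nR V -> 10000 * (eps3 * nR V) <= nR V -> 100 <= tau * nR V ->
  nearQ tau h -> (#|block h 0| <= #|block h 1|)%N ->
  exists h', (forall x, h' x < 4)%N /\
    condQ E (block h' 0) (block h' 1) (block h' 2) (block h' 3) eps3 /\
    (#|block h' 0| <= #|block h' 1|)%N.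
Proof.
move=> htau heps3 hn hQ hab.
by apply: balance_condQ (nearQ_balance_inv _ _ hQ hab); lra.
Qed.

End SwapAB.

Section Cases.
Variables (V : finType) (E : rel V) (g : V -> nat) (Z : {set V}) (t : R).
Hypothesis g4 : forall x, (g x < 4)%N.
Hypothesis typicalZ : forall x, x \notin Z -> typical E g t x.
Hypothesis dego : forall x, (#|V| <= 2 * dout E setT x)%N.
Hypothesis degi : forall x, (#|V| <= 2 * din E setT x)%N.
Hypothesis b01 : (#|block g 0| <= #|block g 1| + 1)%N.
Hypothesis b10 : (#|block g 1| <= #|block g 0| + 1)%N.
Hypothesis b23 : (#|block g 2| <= #|block g 3| + 1)%N.
Hypothesis b32 : (#|block g 3| <= #|block g 2| + 1)%N.

Lemma blocks_balancedR :
  INR #|block g 0| <= INR #|block g 1| + 1 /\ INR #|block g 1| <= INR #|block g 0| + 1 /\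
  INR #|block g 2| <= INR #|block g 3| + 1 /\ INR #|block g 3| <= INR #|block g 2| + 1.
Proof.
have := leq_INR b01; have := leq_INR b10; have := leq_INR b23; have := leq_INR b32.
by rewrite !plus_INR /=; lra.
Qed.

Definition relabel_on (D : {set V}) (r : V -> nat) x := if x \in D then r x else g x.

Lemma relabel_on_out (D : {set V}) (r : V -> nat) x : x \notin D -> relabel_on D r x = g x.
Proof. by rewrite /relabel_on => /negbTE ->. Qed.

Lemma relabel_on_lt4 (D : {set V}) (r : V -> nat) :
  (forall x, r x < 4)%N -> forall x, (relabel_on D r x < 4)%N.
Proof. by move=> r4 x; rewrite /relabel_on; case: ifP. Qed.

Lemma relabel_onP (D : {set V}) (r : V -> nat) x :
  (x \in D /\ relabel_on D r x = r x) \/ (x \notin D /\ relabel_on D r x = g x).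
Proof. by rewrite /relabel_on; case: ifP => xD; [left | right]. Qed.

Section CaseP.
Variables (eta eps3 tau : R).
Hypothesis heta : 100 * (eta * nR V) <= nR V.
Hypothesis heps3 : 100 * (eps3 * nR V) <= eta * nR V.
Hypothesis htau : 100 * (tau * nR V) <= eps3 * nR V.
Hypothesis hn : 100 <= tau * nR V.
Hypothesis ht : 0 <= t <= tau * nR V.
Hypothesis hZ : INR #|Z| <= tau * nR V.
Hypothesis hA : INR #|block g 0| < 2 * tau * nR V + 1.

Definition ruleP x : nat :=
  let p := 2 * eta * nR V in
  if Rleb p (INR (dout_blk E g 2 x)) && Rleb p (INR (din_blk E g 2 x)) then 2%N
  else if Rleb p (INR (dout_blk E g 3 x)) && Rleb p (INR (din_blk E g 3 x)) then 3%N
  else if Rleb p (INR (din_blk E g 2 x)) then 1%N else 0%N.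

Lemma ruleP_lt4 x : (ruleP x < 4)%N.
Proof. by rewrite /ruleP; repeat case: ifP. Qed.

Lemma ruleP_cases x (p := 2 * eta * nR V) :
  (ruleP x = 2%N -> p <= INR (dout_blk E g 2 x) /\ p <= INR (din_blk E g 2 x)) /\
  (ruleP x = 3%N -> p <= INR (dout_blk E g 3 x) /\ p <= INR (din_blk E g 3 x)) /\
  (ruleP x = 0%N -> (INR (dout_blk E g 2 x) < p \/ INR (din_blk E g 2 x) < p) /\
                    (INR (dout_blk E g 3 x) < p \/ INR (din_blk E g 3 x) < p) /\
                    INR (din_blk E g 2 x) < p) /\
  (ruleP x = 1%N -> (INR (dout_blk E g 2 x) < p \/ INR (din_blk E g 2 x) < p) /\
                    (INR (dout_blk E g 3 x) < p \/ INR (din_blk E g 3 x) < p) /\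
                    p <= INR (din_blk E g 2 x)).
Proof.
rewrite /ruleP -/p.
case: (RlebP p (INR (dout_blk E g 2 x))) => [h1|/Rnot_le_lt h1];
case: (RlebP p (INR (din_blk E g 2 x))) => [h2|/Rnot_le_lt h2];
case: (RlebP p (INR (dout_blk E g 3 x))) => [h3|/Rnot_le_lt h3];
case: (RlebP p (INR (din_blk E g 3 x))) => [h4|/Rnot_le_lt h4] /=;
  (split; [|split; [|split]]) => // _; repeat split; by [|left|right].
Qed.

Definition DP := block g 0 :|: block g 1 :|: Z.
Definition fP := relabel_on DP ruleP.

Lemma card_DP : INR #|DP| <= 6 * tau * nR V.
Proof.
have cD : (#|DP| <= #|block g 0| + #|block g 1| + #|Z|)%N.
  apply: leq_trans (leq_card_setU _ _) _; rewrite leq_add2r; exact: leq_card_setU.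
have := leq_INR cD; have := blocks_balancedR; rewrite !plus_INR; lra.
Qed.

Lemma card_ST_P k : (k = 2 \/ k = 3)%N ->
  nR V / 2 - 3 * tau * nR V <= INR #|block g k| <= nR V / 2 + 1.
Proof.
move=> k23; have := card_blk_sumR g4; have := blocks_balancedR.
have := pos_INR #|block g 0|; have := pos_INR #|block g 1|.
by case: k23 => ->; lra.
Qed.

Lemma relabelP_cardR k : (k = 2 \/ k = 3)%N ->
  nR V / 2 - 9 * tau * nR V <= INR #|block fP k| <= nR V / 2 + 7 * tau * nR V.
Proof.
move=> k23; have := relabel_cardR (@relabel_on_out DP ruleP) k; rewrite -/fP.
have := card_ST_P k23; have := card_DP; lra.
Qed.

Lemma relabelP_cardAB : INR #|block fP 0| + INR #|block fP 1| <= 6 * tau * nR V.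
Proof.
have sAB : (#|block fP 0 :|: block fP 1| <= #|DP|)%N.
  apply/subset_leq_card/subsetP=> x; rewrite in_setU !in_block /fP.
  case: (relabel_onP DP ruleP x) => [[] //|[xD ->]].
  move: xD (g4 x); rewrite !inE !negb_or; case: (g x) => [|[|[|[|k]]]] //.
have := leq_INR sAB; rewrite card_blkU // plus_INR; have := card_DP; lra.
Qed.

Section OwnBlock.
Variables (k : nat) (x : V).
Hypothesis k23 : (k = 2 \/ k = 3)%N.
Hypothesis fxk : fP x = k.

Lemma relabelP_settled : x \notin DP ->
  nR V / 2 - 10 * tau * nR V <= INR (dout_blk E fP k x) /\
  nR V / 2 - 10 * tau * nR V <= INR (din_blk E fP k x).
Proof.
move=> xD; have xZ : x \notin Z by move: xD; rewrite !inE !negb_or => /andP[].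
have gx : g x = k by rewrite -(relabel_on_out ruleP xD).
have := relabel_degR E (@relabel_on_out DP ruleP) k x; rewrite -/fP.
have := card_DP; have := card_ST_P k23; have xt := typicalZ xZ.
case: k23 gx => -> gx.
- by have := typical_S xt gx; have := dout_blkR E g 1 x; have := din_blkR E g 0 x; lra.
- by have := typical_T xt gx; have := dout_blkR E g 0 x; have := din_blkR E g 1 x; lra.
Qed.

Lemma relabelP_own :
  eta * nR V <= INR (dout_blk E fP k x) /\ eta * nR V <= INR (din_blk E fP k x).
Proof.
case: (relabel_onP DP ruleP x) => [[_ rx]|[xD _]]; last first.
  by have := relabelP_settled xD; lra.
have := relabel_degR E (@relabel_on_out DP ruleP) k x; rewrite -/fP.
have := card_DP; have [r2 [r3 _]] := ruleP_cases x; rewrite -/fP fxk in rx.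
by case: k23 rx => -> rx; [have := r2 (esym rx) | have := r3 (esym rx)]; lra.
Qed.

End OwnBlock.

Lemma relabelP_AB x : (fP x = 0 \/ fP x = 1)%N -> ruleP x = fP x.
Proof.
rewrite /fP; case: (relabel_onP DP ruleP x) => [[_ ->] //|[xD ->] gx01].
by move: xD; rewrite !inE; case: gx01 => ->.
Qed.

(* [x] was put into [A] because it has few in-neighbours in [S] and cannot
   go to [T]; as [A] and [B] are tiny, the semidegree bound then pushes its
   out-neighbours into [S] and its in-neighbours into [T]. *)
Lemma relabelP_A x : fP x = 0%N ->
  nR V / 2 - 3 * eta * nR V < INR (din_blk E fP 3 x) /\
  nR V / 2 - 3 * eta * nR V < INR (dout_blk E fP 2 x) /\
  INR (din_blk E fP 2 x) <= 3 * eta * nR V /\ INR (dout_blk E fP 3 x) <= 3 * eta * nR V.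
Proof.
move=> fx; have := relabelP_AB (or_introl fx); rewrite fx => rx.
have := relabel_degR E (@relabel_on_out DP ruleP) 2 x.
have := relabel_degR E (@relabel_on_out DP ruleP) 3 x; rewrite -/fP.
have := card_DP; have := blocks_balancedR; have := semideg_blk_sumR g4 (dego x) (degi x).
have := dout_blkR E g 0 x; have := dout_blkR E g 1 x.
have := din_blkR E g 0 x; have := din_blkR E g 1 x.
have [_ [_ [r0 _]]] := ruleP_cases x.
by have [[c1|c1] [[c2|c2] c3]] := r0 rx; lra.
Qed.

Lemma relabelP_B x : fP x = 1%N ->
  nR V / 2 - 3 * eta * nR V < INR (din_blk E fP 2 x) /\
  nR V / 2 - 3 * eta * nR V < INR (dout_blk E fP 3 x) /\
  INR (din_blk E fP 3 x) <= 3 * eta * nR V /\ INR (dout_blk E fP 2 x) <= 3 * eta * nR V.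
Proof.
move=> fx; have := relabelP_AB (or_intror fx); rewrite fx => rx.
have := relabel_degR E (@relabel_on_out DP ruleP) 2 x.
have := relabel_degR E (@relabel_on_out DP ruleP) 3 x; rewrite -/fP.
have := card_DP; have := blocks_balancedR; have := semideg_blk_sumR g4 (dego x) (degi x).
have := dout_blkR E g 0 x; have := dout_blkR E g 1 x.
have := din_blkR E g 0 x; have := din_blkR E g 1 x.
have [_ [_ [_ r1]]] := ruleP_cases x.
by have [[c1|c1] [[c2|c2] c3]] := r1 rx; lra.
Qed.

Lemma caseP : exists A B S T : {set V},
  partition4 A B S T /\ condP E A B S T eps3 eta.
Proof.
exists (block fP 0), (block fP 1), (block fP 2), (block fP 3).
split; first exact/partition4_blocks/relabel_on_lt4/ruleP_lt4.
have [[h1 h2] [h3 h4]] := half_boundsR #|V|; rewrite -/(nR V) in h1 h2 h3 h4.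
have := relabelP_cardR (or_introl erefl); have := relabelP_cardR (or_intror erefl).
have := relabelP_cardAB; have := card_DP => cD cAB cT cS.
have settled k : (k = 2 \/ k = 3)%N ->
    all_but (block fP k) (eps3 * nR V)
      (fun x => dpm_ge E (block fP k) x (nR V / 2 - eps3 * nR V)).
  move=> k23; apply: (all_but_setD (D := DP)); first lra.
  move=> x; rewrite in_block => /eqP fxk /(relabelP_settled k23 fxk).
  by rewrite /dpm_ge /dout_blk /din_blk; lra.
do 2 (split; first lra).
split; first by move=> x; rewrite in_block => /eqP; apply: relabelP_own; left.
split; first by move=> x; rewrite in_block => /eqP; apply: relabelP_own; right.
split; first by apply: settled; left.
split; first by apply: settled; right.
split; first lra.
split; move=> x; rewrite in_block => /eqP; [exact: relabelP_A | exact: relabelP_B].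
Qed.

End CaseP.

Section CaseQ.
Variables (eps3 tau : R).
Hypothesis heps3 : 10000 * (eps3 * nR V) <= nR V.
Hypothesis htau : 100 * (tau * nR V) <= eps3 * nR V.
Hypothesis hn : 100 <= tau * nR V.
Hypothesis ht : 0 <= t <= tau * nR V.
Hypothesis hZ : INR #|Z| <= tau * nR V.
Hypothesis hS : INR #|block g 2| < 2 * tau * nR V + 1.

Definition ruleQ x : nat :=
  let q := nR V / 40 in
  if Rleb q (INR (dout_blk E g 1 x)) && Rleb q (INR (din_blk E g 1 x)) then 0%N
  else if Rleb q (INR (dout_blk E g 0 x)) && Rleb q (INR (din_blk E g 0 x)) then 1%N
  else if Rleb q (INR (din_blk E g 0 x)) then 2%N else 3%N.

Lemma ruleQ_lt4 x : (ruleQ x < 4)%N.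
Proof. by rewrite /ruleQ; repeat case: ifP. Qed.

Lemma ruleQ_cases x (q := nR V / 40) :
  (ruleQ x = 0%N -> q <= INR (dout_blk E g 1 x) /\ q <= INR (din_blk E g 1 x)) /\
  (ruleQ x = 1%N -> q <= INR (dout_blk E g 0 x) /\ q <= INR (din_blk E g 0 x)) /\
  (ruleQ x = 2%N -> (INR (dout_blk E g 1 x) < q \/ INR (din_blk E g 1 x) < q) /\
                    (INR (dout_blk E g 0 x) < q \/ INR (din_blk E g 0 x) < q) /\
                    q <= INR (din_blk E g 0 x)) /\
  (ruleQ x = 3%N -> (INR (dout_blk E g 1 x) < q \/ INR (din_blk E g 1 x) < q) /\
                    (INR (dout_blk E g 0 x) < q \/ INR (din_blk E g 0 x) < q) /\
                    INR (din_blk E g 0 x) < q).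
Proof.
rewrite /ruleQ -/q.
case: (RlebP q (INR (dout_blk E g 1 x))) => [h1|/Rnot_le_lt h1];
case: (RlebP q (INR (din_blk E g 1 x))) => [h2|/Rnot_le_lt h2];
case: (RlebP q (INR (dout_blk E g 0 x))) => [h3|/Rnot_le_lt h3];
case: (RlebP q (INR (din_blk E g 0 x))) => [h4|/Rnot_le_lt h4] /=;
  (split; [|split; [|split]]) => // _; repeat split; by [|left|right].
Qed.

Definition DQ := block g 2 :|: block g 3 :|: Z.
Definition fQ := relabel_on DQ ruleQ.

Lemma card_DQ : INR #|DQ| <= 6 * tau * nR V.
Proof.
have cD : (#|DQ| <= #|block g 2| + #|block g 3| + #|Z|)%N.
  apply: leq_trans (leq_card_setU _ _) _; rewrite leq_add2r; exact: leq_card_setU.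
have := leq_INR cD; have := blocks_balancedR; rewrite !plus_INR; lra.
Qed.

Lemma card_AB_Q k : (k = 0 \/ k = 1)%N ->
  nR V / 2 - 3 * tau * nR V <= INR #|block g k| <= nR V / 2 + 1.
Proof.
move=> k01; have := card_blk_sumR g4; have := blocks_balancedR.
have := pos_INR #|block g 2|; have := pos_INR #|block g 3|.
by case: k01 => ->; lra.
Qed.

Lemma relabelQ_cardR k : (k = 0 \/ k = 1)%N ->
  nR V / 2 - 9 * tau * nR V <= INR #|block fQ k| <= nR V / 2 + 7 * tau * nR V.
Proof.
move=> k01; have := relabel_cardR (@relabel_on_out DQ ruleQ) k; rewrite -/fQ.
have := card_AB_Q k01; have := card_DQ; lra.
Qed.

Lemma relabelQ_cardST : INR #|block fQ 2| + INR #|block fQ 3| <= 6 * tau * nR V.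
Proof.
have sST : (#|block fQ 2 :|: block fQ 3| <= #|DQ|)%N.
  apply/subset_leq_card/subsetP=> x; rewrite in_setU !in_block /fQ.
  case: (relabel_onP DQ ruleQ x) => [[] //|[xD ->] gx23].
  by move: xD; rewrite !inE; case/orP: gx23 => ->; rewrite ?orbT.
have := leq_INR sST; rewrite card_blkU // plus_INR; have := card_DQ; lra.
Qed.

Lemma relabelQ_settled k x : (k = 0 \/ k = 1)%N -> fQ x = k -> x \notin DQ ->
  nR V / 2 - 10 * tau * nR V <= INR (dout_blk E fQ (1 - k) x) /\
  nR V / 2 - 10 * tau * nR V <= INR (din_blk E fQ (1 - k) x).
Proof.
move=> k01 fxk xD; have xZ : x \notin Z by move: xD; rewrite !inE !negb_or => /andP[].
have gx : g x = k by rewrite -(relabel_on_out ruleQ xD).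
have xt := typicalZ xZ; have := card_DQ.
have := dout_blkR E g 2 x; have := dout_blkR E g 3 x.
have := din_blkR E g 2 x; have := din_blkR E g 3 x.
case: k01 gx => -> gx; [rewrite subn0 | rewrite subnn].
- have := relabel_degR E (@relabel_on_out DQ ruleQ) 1 x; rewrite -/fQ.
  by have := card_AB_Q (or_intror erefl); have := typical_A xt gx; lra.
- have := relabel_degR E (@relabel_on_out DQ ruleQ) 0 x; rewrite -/fQ.
  by have := card_AB_Q (or_introl erefl); have := typical_B xt gx; lra.
Qed.

Lemma relabelQ_deg_ok x : deg_ok E fQ (nR V / 40 - 6 * tau * nR V) x.
Proof.
have := relabel_degR E (@relabel_on_out DQ ruleQ) 0 x.
have := relabel_degR E (@relabel_on_out DQ ruleQ) 1 x.
have := card_DQ; have := blocks_balancedR; have := semideg_blk_sumR g4 (dego x) (degi x).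
have := dout_blkR E g 2 x; have := dout_blkR E g 3 x.
have := din_blkR E g 2 x; have := din_blkR E g 3 x.
rewrite /deg_ok /fQ /dout_blk /din_blk.
case: (relabel_onP DQ ruleQ x) => [[_ ->]|[xD ->]].
  have [r0 [r1 [r2 r3]]] := ruleQ_cases x; rewrite /dout_blk /din_blk in r0 r1 r2 r3.
  split; [|split; [|split]] => rx;
    [have := r0 rx | have := r1 rx
    | have [[?|?] [[?|?] ?]] := r2 rx | have [[?|?] [[?|?] ?]] := r3 rx]; lra.
have xZ : x \notin Z by move: xD; rewrite !inE !negb_or => /andP[].
have xt := typicalZ xZ.
have := card_AB_Q (or_introl erefl); have := card_AB_Q (or_intror erefl).
split; [|split; [|split]] => gx.
- by have := typical_A xt gx; rewrite /dout_blk /din_blk; lra.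
- by have := typical_B xt gx; rewrite /dout_blk /din_blk; lra.
- by move: xD; rewrite !inE gx.
- by move: xD; rewrite !inE gx.
Qed.

Lemma relabelQ_near : nearQ E tau fQ.
Proof.
have settled k : (k = 0 \/ k = 1)%N ->
    all_but (block fQ k) (6 * tau * nR V)
      (fun x => dpm_ge E (block fQ (1 - k)) x (nR V / 2 - 10 * tau * nR V)).
  move=> k01; apply: (all_but_setD (D := DQ)); first exact: card_DQ.
  move=> x; rewrite in_block => /eqP fxk /(relabelQ_settled k01 fxk).
  by rewrite /dpm_ge /dout_blk /din_blk.
split; first exact/relabel_on_lt4/ruleQ_lt4.
split; first exact: relabelQ_cardR (or_introl erefl).
split; first exact: relabelQ_cardR (or_intror erefl).
split; first exact: relabelQ_deg_ok.
split; first exact: relabelQ_cardST.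
by split; [exact: settled (or_introl erefl) | exact: settled (or_intror erefl)].
Qed.

Lemma caseQ : exists A B S T : {set V},
  partition4 A B S T /\ (condQ E A B S T eps3 /\ (#|A| <= #|B|)%N).
Proof.
have [h [hQ hAB]] : exists h, nearQ E tau h /\ (#|block h 0| <= #|block h 1|)%N.
  case: (leqP #|block fQ 0| #|block fQ 1|) => ab.
    by exists fQ; split; [exact: relabelQ_near | exact: ab].
  exists (fun x => swapAB (fQ x)); split; first exact/nearQ_swapAB/relabelQ_near.
  by have [-> [-> _]] := block_swapAB fQ; apply: ltnW.
have [h' [h4 [cQ ab']]] := nearQ_condQ htau heps3 hn hQ hAB.
exists (block h' 0), (block h' 1), (block h' 2), (block h' 3).
by split; first exact: partition4_blocks.
Qed.

End CaseQ.

Section CaseR.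
Variables (eps1 eta1 tau r : R).
Hypothesis heta1 : 100 * (eta1 * nR V) <= tau * nR V.
Hypothesis heps1 : eps1 * nR V <= eta1 * nR V.
Hypothesis hn : 100 <= eta1 * nR V.
Hypothesis ht : 0 <= t <= eta1 * nR V.
Hypothesis htZ : t + 4 * INR #|Z| <= r * nR V.
Hypothesis hZ : 1 + 2 * INR #|Z| <= eps1 * nR V.
Hypothesis hbig : 2 * tau * nR V <= INR #|block g 0| /\ 2 * tau * nR V <= INR #|block g 1| /\
                  2 * tau * nR V <= INR #|block g 2| /\ 2 * tau * nR V <= INR #|block g 3|.

Definition ruleR x : nat :=
  let p := 2 * eta1 * nR V in
  let dO k := INR (dout_blk E g k x) in let dI k := INR (din_blk E g k x) in
  if Rleb p (dO 1%N + dO 2%N) && Rleb p (dI 0%N + dI 2%N) then 2%N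
  else if Rleb p (dO 0%N + dO 3%N) && Rleb p (dI 1%N + dI 3%N) then 3%N
  else if Rleb p (dO 1%N) && Rleb p (dI 1%N) then 0%N else 1%N.

Lemma ruleR_lt4 x : (ruleR x < 4)%N.
Proof. by rewrite /ruleR; repeat case: ifP. Qed.

Lemma ruleR_cases x (p := 2 * eta1 * nR V)
    (dO := fun k => INR (dout_blk E g k x)) (dI := fun k => INR (din_blk E g k x)) :
  (ruleR x = 2%N -> p <= dO 1%N + dO 2%N /\ p <= dI 0%N + dI 2%N) /\
  (ruleR x = 3%N -> p <= dO 0%N + dO 3%N /\ p <= dI 1%N + dI 3%N) /\
  (ruleR x = 0%N -> p <= dO 1%N /\ p <= dI 1%N) /\
  (ruleR x = 1%N -> (dO 1%N + dO 2%N < p \/ dI 0%N + dI 2%N < p) /\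
                    (dO 0%N + dO 3%N < p \/ dI 1%N + dI 3%N < p) /\
                    (dO 1%N < p \/ dI 1%N < p)).
Proof.
rewrite /ruleR -/p -/dO -/dI.
case: (RlebP p (dO 1%N + dO 2%N)) => [h1|/Rnot_le_lt h1];
case: (RlebP p (dI 0%N + dI 2%N)) => [h2|/Rnot_le_lt h2];
case: (RlebP p (dO 0%N + dO 3%N)) => [h3|/Rnot_le_lt h3];
case: (RlebP p (dI 1%N + dI 3%N)) => [h4|/Rnot_le_lt h4];
case: (RlebP p (dO 1%N)) => [h5|/Rnot_le_lt h5];
case: (RlebP p (dI 1%N)) => [h6|/Rnot_le_lt h6] /=;
  (split; [|split; [|split]]) => // _; repeat split; by [|left|right].
Qed.

Definition fR := relabel_on Z ruleR.

Section Labels.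
Variable x : V.
Let degR k := relabel_degR E (@relabel_on_out Z ruleR) k x.
Let cardR k := relabel_cardR (@relabel_on_out Z ruleR) k.
Let outR k := dout_blkR E g k x.
Let inR k := din_blkR E g k x.
Let fZ : INR #|Z| <= eta1 * nR V. Proof. lra. Qed.

Lemma relabelR_A : fR x = 0%N ->
  eta1 * nR V <= INR (dout_blk E fR 1 x) /\ eta1 * nR V <= INR (din_blk E fR 1 x) /\
  (x \notin Z -> INR #|block fR 1| - r * nR V <= INR (dout_blk E fR 1 x) /\
                 INR #|block fR 1| - r * nR V <= INR (din_blk E fR 1 x)).
Proof.
have [[xZ fx]|[xZ fx]] := relabel_onP Z ruleR x; rewrite -/fR in fx; rewrite {}fx => hx;
  have := degR 1; have := cardR 1; rewrite -/fR; have := outR 2; have := inR 3.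
  have [_ [_ [r0 _]]] := ruleR_cases x; have /= := r0 hx.
  by split; [lra | split; [lra | rewrite xZ]].
have := typical_A (typicalZ xZ) hx.
by split; [lra | split; [lra | split; lra]].
Qed.

Lemma relabelR_B : fR x = 1%N ->
  eta1 * nR V <= INR (dout_blk E fR 0 x) /\ eta1 * nR V <= INR (din_blk E fR 0 x) /\
  (x \notin Z -> INR #|block fR 0| - r * nR V <= INR (dout_blk E fR 0 x) /\
                 INR #|block fR 0| - r * nR V <= INR (din_blk E fR 0 x)).
Proof.
have [[xZ fx]|[xZ fx]] := relabel_onP Z ruleR x; rewrite -/fR in fx; rewrite {}fx => hx;
  have := degR 0; have := cardR 0; rewrite -/fR; have := outR 3; have := inR 2.
  have := outR 0; have := outR 1; have := outR 2; have := inR 0; have := inR 1; have := inR 3.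
  have := card_blk_sumR g4; have := blocks_balancedR.
  have := semideg_blk_sumR g4 (dego x) (degi x).
  have [_ [_ [_ r1]]] := ruleR_cases x; have /= [[c1|c1] [[c2|c2] [c3|c3]]] := r1 hx;
  by split; [lra | split; [lra | rewrite xZ]].
have := typical_B (typicalZ xZ) hx.
by split; [lra | split; [lra | split; lra]].
Qed.

Lemma relabelR_S : fR x = 2%N ->
  eta1 * nR V <= INR (dout_blk E fR 1 x) + INR (dout_blk E fR 2 x) /\
  eta1 * nR V <= INR (din_blk E fR 0 x) + INR (din_blk E fR 2 x) /\
  (x \notin Z ->
     INR #|block fR 1| + INR #|block fR 2| - r * nR V
       <= INR (dout_blk E fR 1 x) + INR (dout_blk E fR 2 x) /\
     INR #|block fR 0| + INR #|block fR 2| - r * nR V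
       <= INR (din_blk E fR 0 x) + INR (din_blk E fR 2 x)).
Proof.
have [[xZ fx]|[xZ fx]] := relabel_onP Z ruleR x; rewrite -/fR in fx; rewrite {}fx => hx;
  have := degR 0; have := degR 1; have := degR 2;
  have := cardR 0; have := cardR 1; have := cardR 2; rewrite -/fR.
  have [r2 _] := ruleR_cases x; have /= := r2 hx.
  by split; [lra | split; [lra | rewrite xZ]].
have := typical_S (typicalZ xZ) hx.
by split; [lra | split; [lra | split; lra]].
Qed.

Lemma relabelR_T : fR x = 3%N ->
  eta1 * nR V <= INR (dout_blk E fR 0 x) + INR (dout_blk E fR 3 x) /\
  eta1 * nR V <= INR (din_blk E fR 1 x) + INR (din_blk E fR 3 x) /\
  (x \notin Z ->
     INR #|block fR 0| + INR #|block fR 3| - r * nR V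
       <= INR (dout_blk E fR 0 x) + INR (dout_blk E fR 3 x) /\
     INR #|block fR 1| + INR #|block fR 3| - r * nR V
       <= INR (din_blk E fR 1 x) + INR (din_blk E fR 3 x)).
Proof.
have [[xZ fx]|[xZ fx]] := relabel_onP Z ruleR x; rewrite -/fR in fx; rewrite {}fx => hx;
  have := degR 0; have := degR 1; have := degR 3;
  have := cardR 0; have := cardR 1; have := cardR 3; rewrite -/fR.
  have [_ [r3 _]] := ruleR_cases x; have /= := r3 hx.
  by split; [lra | split; [lra | rewrite xZ]].
have := typical_T (typicalZ xZ) hx.
by split; [lra | split; [lra | split; lra]].
Qed.

End Labels.

Lemma caseR eps : Rpower eps (1/3) = r ->
  exists A B S T : {set V}, partition4 A B S T /\ condR E A B S T eps eps1 eta1 tau.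
Proof.
move=> hr; exists (block fR 0), (block fR 1), (block fR 2), (block fR 3).
split; first exact/partition4_blocks/relabel_on_lt4/ruleR_lt4.
have cardR := relabel_cardR (@relabel_on_out Z ruleR); rewrite -/fR in cardR.
have := cardR 0%N; have := cardR 1%N; have := cardR 2%N; have := cardR 3%N.
move=> c3 c2 c1 c0; have := blocks_balancedR => bal.
have Zsmall : INR #|Z| <= eps1 * nR V by lra.
rewrite /condR; cbv zeta; rewrite hr.
do 4 (split; first lra).
do 2 (split; first by apply: Rabs_le; lra).
split.
  move=> x; rewrite in_setU !in_block => /orP[] /eqP fx.
    by have [-> ->] := bip_deg_A E fx; have [? [? _]] := relabelR_A fx.
  by have [-> ->] := bip_deg_B E fx; have [? [? _]] := relabelR_B fx.
split.
  move=> x; rewrite in_block => /eqP fx; rewrite dout_blkU // din_blkU // !plus_INR.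
  by have [? [? _]] := relabelR_S fx.
split.
  move=> x; rewrite in_block => /eqP fx; rewrite dout_blkU // din_blkU // !plus_INR.
  by have [? [? _]] := relabelR_T fx.
split.
  apply: (all_but_setD (D := Z)) => // x; rewrite in_block => /eqP fx xZ.
  by have [_ [_ /(_ xZ)]] := relabelR_A fx.
split.
  apply: (all_but_setD (D := Z)) => // x; rewrite in_block => /eqP fx xZ.
  by have [_ [_ /(_ xZ)]] := relabelR_B fx.
split.
  apply: (all_but_setD (D := Z)) => // x; rewrite in_block => /eqP fx xZ.
  rewrite dout_blkU // din_blkU // !plus_INR.
  by have [_ [_ /(_ xZ)]] := relabelR_S fx.
apply: (all_but_setD (D := Z)) => // x; rewrite in_block => /eqP fx xZ.
rewrite dout_blkU // din_blkU // !plus_INR.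
by have [_ [_ /(_ xZ)]] := relabelR_T fx.
Qed.

End CaseR.

Lemma extremal_trichotomy eta2 eps3 tau eta1 eps1 eps r :
  100 * (eta2 * nR V) <= nR V -> 100 * (eps3 * nR V) <= eta2 * nR V ->
  100 * (tau * nR V) <= eps3 * nR V -> 100 * (eta1 * nR V) <= tau * nR V ->
  eps1 * nR V <= eta1 * nR V -> 100 <= eta1 * nR V -> 0 <= t <= eta1 * nR V ->
  t + 4 * INR #|Z| <= r * nR V -> 1 + 2 * INR #|Z| <= eps1 * nR V -> Rpower eps (1/3) = r ->
  exists A B S T : {set V}, partition4 A B S T /\
    (condP E A B S T eps3 eta2 \/ (condQ E A B S T eps3 /\ (#|A| <= #|B|)%N) \/
     condR E A B S T eps eps1 eta1 tau).
Proof.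
move=> h2 h3 htau h1 he1 hn ht htZ hZ hr.
have := blocks_balancedR; have := pos_INR #|Z| => Z0 bal.
have [cA|cA] := Rlt_le_dec (INR #|block g 0|) (2 * tau * nR V + 1).
  have [A [B [S [T [p c]]]]] := caseP h2 h3 htau ltac:(lra) ltac:(lra) ltac:(lra) cA.
  by exists A, B, S, T; split => //; left.
have [cS|cS] := Rlt_le_dec (INR #|block g 2|) (2 * tau * nR V + 1).
  have [A [B [S [T [p c]]]]] :=
    @caseQ eps3 tau ltac:(lra) htau ltac:(lra) ltac:(lra) ltac:(lra) cS.
  by exists A, B, S, T; split => //; right; left.
have [A [B [S [T [p c]]]]] := caseR h1 he1 hn ht htZ hZ ltac:(lra) hr.
by exists A, B, S, T; split => //; right; right.
Qed.

End Cases.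

Lemma balanced_nat (a b : nat) : Rabs (INR a - INR b) <= 1 -> (a <= b + 1)%N /\ (b <= a + 1)%N.
Proof.
move=> h; have := Rle_trans _ _ _ (Rle_abs _) h.
rewrite Rabs_minus_sym in h; have := Rle_trans _ _ _ (Rle_abs _) h.
by move=> h1 h2; split; apply/leP/INR_le; rewrite plus_INR /=; lra.
Qed.

Lemma extremal_labelling (V : finType) (E : rel V) eps : extremal E eps ->
  exists g : V -> nat, (forall x, g x < 4)%N /\
    [/\ (#|block g 0| <= #|block g 1| + 1)%N, (#|block g 1| <= #|block g 0| + 1)%N,
        (#|block g 2| <= #|block g 3| + 1)%N & (#|block g 3| <= #|block g 2| + 1)%N] /\
    INR (eXY E (AS g) (AT g)) < eps * nR V ^ 2.
Proof.
case=> [A [B [S [T [part [hab [hst he]]]]]]].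
have [g [g4 [eA [eB [eS eT]]]]] := partition4_labelling part; subst A B S T.
have [b01 b10] := balanced_nat hab; have [b23 b32] := balanced_nat hst.
by exists g.
Qed.

Lemma semideg_half_nat (V : finType) (E : rel V) : min_semideg_ge [set: V] E (nR V / 2) ->
  (forall x, #|V| <= 2 * dout E setT x)%N /\ (forall x, #|V| <= 2 * din E setT x)%N.
Proof.
move=> hdeg; have two : INR 2 = 2 by [].
split=> x; have [ho hi] := hdeg x (in_setT x); apply/leP/INR_le; rewrite mult_INR two.
- by rewrite /dout; rewrite /nR in ho; lra.
- by rewrite /din; rewrite /nR in hi; lra.
Qed.

Lemma Rpower_third (eps c : R) : 0 < eps -> 0 < c -> eps <= c ^ 3 ->
  0 < Rpower eps (1/3) /\ Rpower eps (1/3) ^ 3 = eps /\ Rpower eps (1/3) <= c.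
Proof.
move=> e0 c0 ec; have r0 : 0 < Rpower eps (1/3) by apply: exp_pos.
have r3 : Rpower eps (1/3) ^ 3 = eps.
  rewrite -Rpower_pow // Rpower_mult.
  have -> : 1 / 3 * INR 3 = 1 by simpl; field.
  exact: Rpower_1.
split=> //; split=> //; apply: Rnot_lt_le => hlt.
move: r0 r3 hlt; set r := Rpower eps (1/3) => r0 r3 hlt.
have : c * c < r * r by apply: Rmult_le_0_lt_compat; lra.
have : c * c * c < r * r * r by apply: Rmult_le_0_lt_compat; nra.
by rewrite /= in r3 ec; lra.
Qed.

(* With [t = r n / 4] and [r = eps^(1/3)], the counting bound gives
   [|Z| <= 16/r + 16 r^2 n], and [n >= 100 / eps] makes this [O(r^2 n)]. *)
Lemma card_atypical_small (V : finType) (E : rel V) (g : V -> nat) (eps r : R) :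
  (forall x, g x < 4)%N ->
  (#|block g 0| <= #|block g 1| + 1)%N -> (#|block g 1| <= #|block g 0| + 1)%N ->
  (#|block g 2| <= #|block g 3| + 1)%N -> (#|block g 3| <= #|block g 2| + 1)%N ->
  (forall x, #|V| <= 2 * dout E setT x)%N -> (forall x, #|V| <= 2 * din E setT x)%N ->
  0 < r -> r ^ 3 = eps -> r <= 1/1000 -> 100 <= eps * nR V ->
  INR (eXY E (AS g) (AT g)) < eps * nR V ^ 2 ->
  INR #|atypical E g (r * nR V / 4)| <= r * nR V / 50.
Proof.
move=> g4 b01 b10 b23 b32 dego degi r0 r3 r1 en he.
have e0 : 0 < eps by rewrite -r3; apply: pow_lt.
have n0 : 0 < nR V by nra.
have rn0 : 0 < r * nR V by apply: Rmult_lt_0_compat.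
have := card_atypical g4 b01 b10 b23 b32 dego degi (t := r * nR V / 4) ltac:(lra).
have := leq_INR (max_card (AS g)); have := leq_INR (max_card (AT g)).
rewrite !plus_INR -/(nR V); change (INR 0) with 0; set Z := atypical _ _ _ => cX cY hZ.
have nn : nR V <= eps * nR V ^ 2 / 100 by simpl; nra.
rewrite -r3 in he nn.
have key : INR #|Z| * (r * nR V) <= (17 * r ^ 2 * nR V) * (r * nR V) by lra.
have := Rmult_le_reg_r _ _ _ rn0 key.
have : r * r * nR V <= r * nR V / 1000 by nra.
by simpl; lra.
Qed.

Lemma large_mul_of_div_lt (eps : R) (N : nat) (V : finType) :
  0 < eps -> 100 / eps < INR N -> (N <= #|V|)%N -> 100 <= eps * nR V.
Proof.
move=> e0 hN /leq_INR hNV.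
have : eps * (100 / eps) < eps * INR N by apply: Rmult_lt_compat_l.
have -> : eps * (100 / eps) = 100 by field; lra.
by rewrite /nR; nra.
Qed.

Lemma hierarchy_scaled (n eta2 eps3 tau eta1 eps1 : R) : 0 <= n ->
  eta2 <= 1/100 -> eps3 <= eta2/100 -> tau <= eps3/100 -> eta1 <= tau/100 -> eps1 <= eta1 ->
  [/\ 100 * (eta2 * n) <= n, 100 * (eps3 * n) <= eta2 * n, 100 * (tau * n) <= eps3 * n,
      100 * (eta1 * n) <= tau * n & eps1 * n <= eta1 * n].
Proof. by move=> n0 *; split; nra. Qed.

Theorem proposition4p5 :
  exists h2 : R, (0 < h2) /\ forall eta2 : R, (0 < eta2 <= h2) ->
  exists h3 : R, (0 < h3) /\ forall eps3 : R, (0 < eps3 <= h3) ->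
  exists ht : R, (0 < ht) /\ forall tau : R, (0 < tau <= ht) ->
  exists h1 : R, (0 < h1) /\ forall eta1 : R, (0 < eta1 <= h1) ->
  exists he1 : R, (0 < he1) /\ forall eps1 : R, (0 < eps1 <= he1) ->
  exists he : R, (0 < he) /\ forall eps : R, (0 < eps <= he) ->
  exists N : nat, forall (V : finType) (E : rel V),
    (N <= #|V|)%N ->
    irreflexive E ->
    extremal E eps ->
    min_semideg_ge [set: V] E (nR V / 2) ->
    exists A B S T : {set V},
      partition4 A B S T /\
      (condP E A B S T eps3 eta2 \/
       (condQ E A B S T eps3 /\ (#|A| <= #|B|)%N) \/
       condR E A B S T eps eps1 eta1 tau).
Proof.
exists (1/100); split; first lra; move=> eta2 [he2 he2'].
exists (eta2/100); split; first lra; move=> eps3 [he3 he3'].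
exists (eps3/100); split; first lra; move=> tau [ht0 ht1].
exists (tau/100); split; first lra; move=> eta1 [hi0 hi1].
exists eta1; split; first lra; move=> eps1 [hj0 hj1].
exists ((eps1/1000)^3); split; first by apply: pow_lt; lra.
move=> eps [hk0 hk1]; have [N HN] := INR_unbounded (100/eps).
exists N => V E HNV _ ext hdeg.
have en := large_mul_of_div_lt hk0 HN HNV.
have [r0 [r3 rle]] := Rpower_third (c := eps1 / 1000) hk0 ltac:(lra) hk1.
set r := Rpower eps (1/3) in r0 r3 rle *.
have [g [g4 [[b01 b10 b23 b32] heXY]]] := extremal_labelling ext.
have [dego degi] := semideg_half_nat hdeg.
have hZ := card_atypical_small g4 b01 b10 b23 b32 dego degi r0 r3 ltac:(lra) en heXY.
have n0 : 0 <= nR V := pos_INR _.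
have [s1 s2 s3 s4 s5] := hierarchy_scaled n0 he2' he3' ht1 hi1 hj1.
have e_r : eps <= r by rewrite -r3 /=; nra.
have := Rmult_le_compat_r _ _ _ n0 e_r; have := Rmult_le_compat_r _ _ _ n0 rle => rn1 rn0.
apply: (extremal_trichotomy g4 (@typical_notin_atypical _ E g (r * nR V / 4)) dego degi
  b01 b10 b23 b32 (r := r) s1 s2 s3 s4 s5) => //;
  have := pos_INR #|atypical E g (r * nR V / 4)|; lra.
Qed.
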